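(* Let $0<q\leq 1$, let $D\in\mathbb{R}^{n\times d}$ be a frame with frame bounds $0<\mathcal{L}\leq\mathcal{U}<\infty$, $\kappa=\mathcal{U}/\mathcal{L}$, let $A\in\mathbb{R}^{m\times n}$, let $s<a$ be positive integers and $\rho=s/a$. Assume $A$ satisfies the $(D^{\dagger},q)$-RIP of order $s+a$ (with constants $\delta_a$ and $\delta_{s+a}<1$), and let $\Delta=\frac{1+\delta_a}{1-\delta_{s+a}}$. Then for any $h\in\mathbb{R}^n$, with $T$ the index set of the $s$ largest entries of $D^*h$ in magnitude, $$\|D_T^*h\|_q^{q}\leq\theta\|D_{T^c}^*h\|_q^q+\frac{\theta\mathcal{L}^{q/2}a^{1-q/2}\|Ah\|_q^q}{1+\delta_a},$$ where $$\theta=2^{-q/2}\left(1+\sqrt{1+4\kappa^{-2}\Delta^{-2/q}}\right)^{q/2}\kappa^q\Delta\rho^{1-q/2}.$$ In particular, if $\rho^{1-q/2}\left(\rho^{2/q-1}+1\right)^{q/2}\kappa^q(1+\delta_a)<1-\delta_{s+a}$, then $\theta<1$.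
   Context: $D$ is a frame with frame bounds $\mathcal{L},\mathcal{U}$ if $\mathcal{L}\|f\|_2^2\leq\|D^*f\|_2^2\leq\mathcal{U}\|f\|_2^2$ for all $f\in\mathbb{R}^n$; $D^{\dagger}=(DD^* )^{-1}D$. $A$ obeys the $(D^\dagger,q)$-RIP of order $k$ with constant $\delta\in[0,1)$ if $(1-\delta)\|D^\dagger v\|_2^q\leq\|AD^\dagger v\|_q^q\leq(1+\delta)\|D^\dagger v\|_2^q$ for all $v\in\mathbb{R}^d$ with at most $k$ nonzero entries; $\delta_k$ is the smallest such $\delta$. For $S\subset[d]$, $D_S^*h$ denotes $D^*h$ restricted to $S$, and $T^c=[d]\setminus T$. *)

From HB Require Import structures.
From mathcomp Require Import all_boot all_order all_algebra.
From mathcomp Require Import reals exp.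
Set Implicit Arguments. Unset Strict Implicit. Unset Printing Implicit Defensive.
Import Order.TTheory GRing.Theory Num.Theory.
Local Open Scope ring_scope.

Section Defs.
Variable R : realType.

Definition norm2 k (x : 'cV[R]_k) : R := Num.sqrt (\sum_(i < k) x i 0 ^+ 2).

Definition normq_q k (q : R) (x : 'cV[R]_k) : R := \sum_(i < k) `|x i 0| `^ q.

Definition normq_q_on k (q : R) (x : 'cV[R]_k) (S : {set 'I_k}) : R :=
  \sum_(i in S) `|x i 0| `^ q.

(* D (n x d) is a frame with frame bounds L, U; D^* is D^T *)
Definition is_frame n d (D : 'M[R]_(n, d)) (L U : R) : Prop :=
  forall f : 'cV[R]_n,
    L * norm2 f ^+ 2 <= norm2 (D^T *m f) ^+ 2 <= U * norm2 f ^+ 2.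

Definition dagger n d (D : 'M[R]_(n, d)) : 'M[R]_(n, d) := invmx (D *m D^T) *m D.

Definition ksparse d (k : nat) (v : 'cV[R]_d) : Prop :=
  (#|[set i | v i ord0 != 0%R]| <= k)%N.

Definition DqRIP m n d (A : 'M[R]_(m, n)) (D : 'M[R]_(n, d)) (q : R) (k : nat)
    (delta : R) : Prop :=
  0 <= delta < 1 /\
  forall v : 'cV[R]_d, ksparse k v ->
    (1 - delta) * norm2 (dagger D *m v) `^ q <= normq_q q (A *m (dagger D *m v))
    <= (1 + delta) * norm2 (dagger D *m v) `^ q.

Definition RIP_const m n d (A : 'M[R]_(m, n)) (D : 'M[R]_(n, d)) (q : R) (k : nat)
    (delta : R) : Prop :=
  DqRIP A D q k delta /\ forall delta', DqRIP A D q k delta' -> delta <= delta'.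

Definition largest_set d (s : nat) (x : 'cV[R]_d) (T : {set 'I_d}) : Prop :=
  #|T| = s /\ forall i j, i \in T -> j \notin T -> `|x j 0| <= `|x i 0|.

End Defs.

(* Write x = D^* h, let T1 collect the a largest entries of x outside T and put
   S = T ∪ T1.  The rest of T^c splits into blocks of a entries, each entrywise below
   the q-mean of the previous block; hence ||x_{S^c}||_2^q and, by the upper RIP of
   order a together with L ||D^† v||_2^2 <= ||v||_2^2, also L^{q/2} ||A D^† x_{S^c}||_q^q
   are bounded by a^{q/2-1} ||x_{T^c}||_q^q (the latter up to the factor 1 + δ_a).
   Since h = D^† x_S + D^† x_{S^c}, the lower RIP of order s + a then bounds
   (L ||D^† x_S||_2^2)^{q/2} by Δ K, where K a^{1-q/2} is the right-hand side of the
   claimed inequality divided by θ.  On the frame side ||x_S||_2^2 = <D^* h, D^* D^† x_S>,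
   so Y = ||x_S||_2^2 obeys Y^2 <= κ^2 (Y + ||x_{S^c}||_2^2) L ||D^† x_S||_2^2; solving
   this quadratic inequality produces the factor (1 + sqrt(1 + 4 κ^-2 Δ^{-2/q})) / 2
   of θ.  Finally ||x_T||_q^q <= s^{1-q/2} ||x_T||_2^q <= s^{1-q/2} Y^{q/2}. *)

From HB Require Import structures.
From mathcomp Require Import all_boot all_order all_algebra.
From mathcomp Require Import reals exp.
From Stdlib Require Import Lia.
From mathcomp Require Import ring lra zify.
Import Order.TTheory GRing.Theory Num.Theory.
Local Open Scope ring_scope.
Set Implicit Arguments. Unset Strict Implicit. Unset Printing Implicit Defensive.

Section PowR.
Variable R : realType.
Implicit Types (p q r x y : R).

Lemma powRD_le p x y : 0 < p -> p <= 1 -> 0 <= x -> 0 <= y ->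
  (x + y) `^ p <= x `^ p + y `^ p.
Proof.
move=> p0 p1 x0 y0; have [->|xy0] := eqVneq (x + y) 0.
  by rewrite powR0 ?gt_eqF // addr_ge0 ?powR_ge0.
have xyp : 0 < x + y by rewrite lt_def xy0 addr_ge0.
have frac_le (z : R) : 0 <= z <= x + y -> z / (x + y) <= (z / (x + y)) `^ p.
  case/andP=> z0 zxy; have [->|zn0] := eqVneq z 0; first by rewrite mul0r powR_ge0.
  have zp : 0 < z by rewrite lt_def zn0.
  by apply: ger1_powR => //; rewrite divr_gt0 //= ler_pdivrMr // mul1r.
have powR_frac (z : R) : 0 <= z -> z `^ p = (z / (x + y)) `^ p * (x + y) `^ p.
  by move=> z0; rewrite -powRM ?divr_ge0 ?(ltW xyp) // (divfK xy0).
rewrite (powR_frac x) // (powR_frac y) // -mulrDl -[X in X <= _]mul1r.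
rewrite ler_wpM2r ?powR_ge0 //.
have := frac_le x; have := frac_le y; rewrite -[1](divff xy0) mulrDl; lra.
Qed.

Lemma powR_inv x r : 0 <= x -> x^-1 `^ r = (x `^ r)^-1.
Proof. by move=> x0; rewrite -powR_inv1 // -powRrM mulN1r powRN. Qed.

Lemma powRrK r x : r != 0 -> 0 <= x -> (x `^ r) `^ r^-1 = x.
Proof. by move=> r0 x0; rewrite -powRrM mulfV // powRr1. Qed.

Lemma powR_divK q x : 0 < q -> 0 <= x -> (x `^ (2 / q)) `^ (q / 2) = x.
Proof.
by move=> q0 x0; rewrite -(invf_div 2 q) powRrK // mulf_neq0 ?invr_eq0 ?lt0r_neq0.
Qed.

Lemma ler_powRV p x y : 0 < p -> 0 <= x -> 0 <= y -> x `^ p <= y -> x <= y `^ p^-1.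
Proof.
move=> p0 x0 y0 xy; rewrite -[x in x <= _](powRrK (lt0r_neq0 p0) x0).
apply: ge0_ler_powR => //; rewrite ?nnegrE ?invr_ge0 ?powR_ge0 ?(ltW p0) //.
Qed.

Lemma powR_lt1 p x : 0 < p -> 0 <= x -> x `^ p < 1 -> x < 1.
Proof.
move=> p0 x0; apply: contraTT; rewrite -!leNgt => x1.
by have := @ge0_ler_powR R p (ltW p0) 1 x; rewrite powR1 !nnegrE ler01 => /(_ isT x0 x1).
Qed.

Lemma norm_powR_sqr q x : `|x| `^ q = (x ^+ 2) `^ (q / 2).
Proof.
by rewrite -real_normK ?num_real // -powR_mulrn // -powRrM mulrC divfK // pnatr_eq0.
Qed.

Lemma sum_powR_le (I : finType) (A : {set I}) (y : I -> R) p :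
  0 < p -> p < 1 -> (forall i, 0 <= y i) ->
  \sum_(i in A) y i `^ p <= #|A|%:R `^ (1 - p) * (\sum_(i in A) y i) `^ p.
Proof.
move=> p0 p1 y0; set S := \sum_(i in A) y i.
have S0 : 0 <= S by rewrite sumr_ge0.
have [S_eq0|Sn0] := eqVneq S 0.
  rewrite big1 ?mulr_ge0 ?powR_ge0 // => i iA.
  by rewrite (psumr_eq0P _ S_eq0) // powR0 // gt_eqF.
have Sp : 0 < S by rewrite lt_def Sn0.
have np : 0 < #|A|%:R :> R.
  by rewrite ltr0n card_gt0; apply: contra_neq Sn0 => A0; rewrite /S A0 big_set0.
set n := #|A|%:R; set b := n^-1 `^ (1 - p).
(* Young's inequality with the conjugate exponents 1/p and 1/(1-p) *)
have young i : (y i / S) `^ p * b <= p * (y i / S) + (1 - p) * n^-1.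
  have p'0 : 0 < p^-1 by rewrite invr_gt0.
  have q'0 : 0 < (1 - p)^-1 by rewrite invr_gt0 subr_gt0.
  have := conjugate_powR (powR_ge0 (y i / S) p) (powR_ge0 n^-1 (1 - p)) p'0 q'0.
  rewrite !invrK !powRrK ?lt0r_neq0 ?subr_gt0 ?divr_ge0 ?invr_ge0 ?(ltW np) //.
  by move=> /(_ (subrKC p 1)); rewrite [p * _]mulrC [(1 - p) / n]mulrC.
have sum_young : (\sum_(i in A) (y i / S) `^ p) * b <= 1.
  rewrite mulr_suml; apply: le_trans (ler_sum _ (fun i _ => young i)) _.
  rewrite big_split /= -mulr_sumr -mulr_suml -/S mulfV // sumr_const -mulr_natr -/n.
  by rewrite divfK ?gt_eqF //; lra.
have bn : b * n `^ (1 - p) = 1.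
  by rewrite -powRM ?invr_ge0 ?ltW // mulVf ?gt_eqF // powR1.
have powR_y i : y i `^ p = (y i / S) `^ p * S `^ p.
  by rewrite -powRM ?divr_ge0 // divfK.
rewrite (eq_bigr _ (fun i _ => powR_y i)) -mulr_suml ler_wpM2r ?powR_ge0 //.
by have := ler_wpM2r (powR_ge0 n (1 - p)) sum_young; rewrite -mulrA bn mulr1 mul1r.
Qed.

End PowR.

Section Theta.
Variable R : realType.
Implicit Types (q k kappa Delta rho Y t p K : R).

Definition quad_root k : R := (1 + Num.sqrt (1 + 4 / k)) / 2.

Lemma quad_root_ge1 k : 0 < k -> 1 <= quad_root k.
Proof.
move=> k0; rewrite /quad_root ler_pdivlMr // mul1r.
have : 1 <= Num.sqrt (1 + 4 / k).
  by rewrite -[X in X <= _]sqrtr1 ler_wsqrtr // lerDl divr_ge0 ?ltW.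
lra.
Qed.

Lemma quad_rootE k : 0 < k -> k * (quad_root k ^+ 2 - quad_root k) = 1.
Proof.
move=> k0; rewrite /quad_root; set t := Num.sqrt _.
have t2 : t ^+ 2 = 1 + 4 / k by rewrite sqr_sqrtr // addr_ge0 // divr_ge0 // ltW.
have -> : ((1 + t) / 2) ^+ 2 - (1 + t) / 2 = (t ^+ 2 - 1) / 4 by field.
by rewrite t2; field; rewrite gt_eqF.
Qed.

Lemma sqr_le_quad_root Y g k : 0 <= Y -> 0 <= g -> 0 < k ->
  Y ^+ 2 <= k * g * (Y + g) -> Y <= k * g * quad_root k.
Proof.
move=> Y0 g0 k0 hY; set c := quad_root k.
have c1 : 1 <= c := quad_root_ge1 k0.
have kc : k * (c ^+ 2 - c) = 1 := quad_rootE k0.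
rewrite leNgt; apply/negP => lt_Y.
(* [k g c] and [k g (1 - c)] are the two roots of [Y^2 = k g (Y + g)] *)
have : 0 < (Y - k * g * c) * (Y + k * g * (c - 1)).
  have kg0 : 0 <= k * g := mulr_ge0 (ltW k0) g0.
  have := mulr_ge0 kg0 (le_trans ler01 c1).
  have : 0 <= k * g * (c - 1) by rewrite mulr_ge0 // subr_ge0.
  by move=> *; apply: mulr_gt0; lra.
have -> : (Y - k * g * c) * (Y + k * g * (c - 1))
    = Y ^+ 2 - k * g * (Y + g) * (k * (c ^+ 2 - c)) + k * g * Y * (k * (c ^+ 2 - c) - 1).
  by ring.
rewrite kc subrr mulr0 addr0 mulr1; lra.
Qed.

Definition rip_theta q kappa Delta rho : R :=
  2 `^ (- (q / 2)) * (1 + Num.sqrt (1 + 4 * kappa ^- 2 * Delta `^ (- (2 / q)))) `^ (q / 2)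
  * kappa `^ q * Delta * rho `^ (1 - q / 2).

Lemma kappa_Delta_powR q kappa Delta : 0 < q -> 0 <= kappa -> 0 <= Delta ->
  (kappa ^+ 2 * Delta `^ (2 / q)) `^ (q / 2) = kappa `^ q * Delta.
Proof.
move=> q0 kappa0 Delta0; rewrite powRM ?exprn_ge0 ?powR_ge0 //.
by rewrite -powR_mulrn // -powRrM [2 * _]mulrC divfK ?pnatr_eq0 // powR_divK.
Qed.

Definition head_gain q kappa Delta : R :=
  kappa ^+ 2 * Delta `^ (2 / q) * quad_root (kappa ^+ 2 * Delta `^ (2 / q)).

Lemma rip_thetaE q kappa Delta rho : 0 < q -> 0 < kappa -> 0 < Delta ->
  rip_theta q kappa Delta rho = rho `^ (1 - q / 2) * head_gain q kappa Delta `^ (q / 2).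
Proof.
move=> q0 kappa0 Delta0; rewrite /head_gain; set k := kappa ^+ 2 * _.
have k0 : 0 < k by rewrite mulr_gt0 ?exprn_gt0 ?powR_gt0.
rewrite powRM ?(ltW k0) ?(le_trans ler01 (quad_root_ge1 k0)) //.
rewrite kappa_Delta_powR ?ltW // /quad_root powRM ?addr_ge0 ?sqrtr_ge0 ?invr_ge0 //.
by rewrite powR_inv // -powRN /k invfM -powRN [4 * _]mulrA /rip_theta; ring.
Qed.

Lemma rip_theta_lt1 q kappa Delta rho : 0 < q -> 0 < kappa -> 0 < Delta ->
  rho `^ (1 - q / 2) * (rho `^ (2 / q - 1) + 1) `^ (q / 2) * kappa `^ q * Delta < 1 ->
  rip_theta q kappa Delta rho < 1.
Proof.
move=> q0 kappa0 Delta0.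
have q20 : 0 < q / 2 by rewrite divr_gt0.
set r := rho `^ (2 / q - 1); have r0 : 0 <= r := powR_ge0 _ _.
have rhoE : rho `^ (1 - q / 2) = r `^ (q / 2).
  by rewrite /r -powRrM; congr (_ `^ _); field; exact: lt0r_neq0.
rewrite rip_thetaE // rhoE -mulrA -(kappa_Delta_powR q0 (ltW kappa0) (ltW Delta0)).
rewrite /head_gain; set k := kappa ^+ 2 * _; set c := quad_root k.
have k0 : 0 < k by rewrite mulr_gt0 ?exprn_gt0 ?powR_gt0.
have c1 : 1 <= c := quad_root_ge1 k0.
have kc : k * (c ^+ 2 - c) = 1 := quad_rootE k0.
have kc0 : 0 < k * c := mulr_gt0 k0 (lt_le_trans ltr01 c1).
rewrite -!powRM ?mulr_ge0 ?addr_ge0 ?exprn_ge0 ?powR_ge0 ?sqrtr_ge0 ?invr_ge0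
  ?(ltW kappa0) ?(le_trans ler01 c1) // => /powR_lt1.
move=> /(_ q20 (mulr_ge0 (mulr_ge0 r0 (addr_ge0 r0 ler01)) (ltW k0))) hyp.
have rr : r * (r + 1) < c * (c - 1).
  by rewrite -(ltr_pM2r k0) (_ : c * (c - 1) * k = 1) //; apply: etrans kc; ring.
have r1c : r + 1 < c.
  rewrite ltNge; apply/negP => cr.
  have : c * (c - 1) <= (r + 1) * r by apply: ler_pM; lra.
  lra.
have rkc : r * (k * c) < (c - 1) * (k * c) by rewrite ltr_pM2r //; lra.
rewrite (_ : (c - 1) * (k * c) = 1) in rkc; last by apply: etrans kc; ring.
by have := gt0_ltr_powR q20 (mulr_ge0 r0 (ltW kc0)) ler01 rkc; rewrite powR1.
Qed.

Lemma head_powR_bound q kappa Delta Y t p K : 0 < q -> 0 < kappa -> 0 < Delta ->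
  0 <= Y -> 0 <= t -> 0 <= p -> Y ^+ 2 <= kappa ^+ 2 * (Y + t) * p ->
  t `^ (q / 2) <= K -> p `^ (q / 2) <= Delta * K ->
  Y `^ (q / 2) <= K * head_gain q kappa Delta `^ (q / 2).
Proof.
move=> q0 kappa0 Delta0 Y0 t0 p0 hY htK hpK; rewrite /head_gain; set k := kappa ^+ 2 * _.
have q20 : 0 < q / 2 by rewrite divr_gt0.
have K0 : 0 <= K := le_trans (powR_ge0 _ _) htK.
have k0 : 0 < k by rewrite mulr_gt0 ?exprn_gt0 ?powR_gt0.
set g := K `^ (2 / q); have g0 : 0 <= g := powR_ge0 _ _.
have inv_q2 : (q / 2)^-1 = 2 / q by rewrite invf_div.
have tg : t <= g by rewrite /g -inv_q2 ler_powRV.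
have pg : p <= Delta `^ (2 / q) * g.
  by rewrite /g -powRM ?(ltW Delta0) // -inv_q2 ler_powRV // mulr_ge0 // ltW.
have /sqr_le_quad_root : Y ^+ 2 <= k * g * (Y + g).
  apply: le_trans hY _.
  have -> : k * g * (Y + g) = kappa ^+ 2 * ((Y + g) * (Delta `^ (2 / q) * g)).
    by rewrite /k; ring.
  by rewrite -[kappa ^+ 2 * _ * p]mulrA ler_wpM2l ?sqr_ge0 // ler_pM ?addr_ge0 // lerD2l.
have c0 : 0 <= quad_root k := le_trans ler01 (quad_root_ge1 k0).
have kc0 : 0 <= k * quad_root k := mulr_ge0 (ltW k0) c0.
move=> /(_ Y0 g0 k0) Yle; apply: le_trans (ge0_ler_powR (ltW q20) _ _ Yle) _.
- by rewrite nnegrE.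
- by rewrite nnegrE mulrAC mulr_ge0.
by rewrite mulrAC mulrC (powRM _ g0 kc0) powR_divK.
Qed.

End Theta.

Section Vectors.
Variable R : realType.
Implicit Types (k : nat) (q : R).

Definition dotv k (u v : 'cV[R]_k) : R := \sum_i u i 0 * v i 0.
Definition sqnorm k (u : 'cV[R]_k) : R := \sum_i u i 0 ^+ 2.
Definition restr k (S : {set 'I_k}) (x : 'cV[R]_k) : 'cV[R]_k :=
  \col_i (if i \in S then x i 0 else 0).

Lemma dotvv k (u : 'cV[R]_k) : dotv u u = sqnorm u.
Proof. by apply: eq_bigr => i _; rewrite expr2. Qed.

Lemma sqnorm_ge0 k (u : 'cV[R]_k) : 0 <= sqnorm u.
Proof. by rewrite sumr_ge0 // => i _; rewrite sqr_ge0. Qed.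

Lemma sqnorm_eq0 k (u : 'cV[R]_k) : sqnorm u = 0 -> u = 0.
Proof.
move=> u0; apply/matrixP => i j; rewrite (ord1 j) mxE; apply/eqP.
by rewrite -sqrf_eq0; apply/eqP; apply: (psumr_eq0P _ u0) => // l _; rewrite sqr_ge0.
Qed.

Lemma norm2_sqr k (u : 'cV[R]_k) : norm2 u ^+ 2 = sqnorm u.
Proof. by rewrite sqr_sqrtr // sqnorm_ge0. Qed.

Lemma norm2_powR k (u : 'cV[R]_k) q : norm2 u `^ q = sqnorm u `^ (q / 2).
Proof. by rewrite /norm2 -powR12_sqrt ?sqnorm_ge0 // -powRrM mulrC. Qed.

Lemma dotv_mulmx k l (M : 'M[R]_(k, l)) (u : 'cV[R]_l) (v : 'cV[R]_k) :
  dotv (M *m u) v = dotv u (M^T *m v).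
Proof.
rewrite /dotv; under eq_bigr do rewrite mxE big_distrl /=.
rewrite exchange_big /=; apply: eq_bigr => j _.
by rewrite mxE big_distrr /=; apply: eq_bigr => i _; rewrite mxE mulrCA mulrA.
Qed.

Lemma sqr_dotv_le k (u v : 'cV[R]_k) : dotv u v ^+ 2 <= sqnorm u * sqnorm v.
Proof.
set a := sqnorm u; set b := sqnorm v; set c := dotv u v.
have b0 : 0 <= b := sqnorm_ge0 v.
have [b_eq0|bn0] := eqVneq b 0.
  by rewrite /c (sqnorm_eq0 b_eq0) /dotv big1 ?b_eq0 => [|i _]; rewrite ?mxE ?mulr0 ?expr0n.
have : 0 <= sqnorm (b *: u - c *: v) := sqnorm_ge0 _.
have -> : sqnorm (b *: u - c *: v) = b * (b * a - c ^+ 2).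
  rewrite /sqnorm (eq_bigr (fun i => b ^+ 2 * u i 0 ^+ 2 - 2 * b * c * (u i 0 * v i 0)
    + c ^+ 2 * v i 0 ^+ 2)); last by move=> i _; rewrite !mxE; ring.
  rewrite !big_split /= sumrN -!mulr_sumr -/(sqnorm u) -/(sqnorm v) -/(dotv u v).
  by rewrite -/a -/b -/c; ring.
have bp : 0 < b by rewrite lt_def bn0.
by move=> h; nra.
Qed.

Lemma sqnorm_restr k (S : {set 'I_k}) x : sqnorm (restr S x) = \sum_(i in S) x i 0 ^+ 2.
Proof.
by rewrite [RHS]big_mkcond; apply: eq_bigr => i _; rewrite mxE; case: ifP; rewrite ?expr0n.
Qed.

Lemma dotv_restr k (S : {set 'I_k}) x : dotv x (restr S x) = sqnorm (restr S x).
Proof. by apply: eq_bigr => i _; rewrite !mxE; case: ifP; rewrite ?mulr0 ?expr0n ?expr2. Qed.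

Lemma restrD k (B S : {set 'I_k}) x :
  B \subset S -> restr S x = restr B x + restr (S :\: B) x.
Proof.
move=> /subsetP BS; apply/matrixP => i j; rewrite !mxE in_setD.
by case: (boolP (i \in B)) => [/BS -> | _]; rewrite ?addr0 ?add0r.
Qed.

Lemma restrC k (S : {set 'I_k}) x : restr S x + restr (~: S) x = x.
Proof.
apply/matrixP => i j; rewrite (ord1 j) !mxE in_setC.
by case: (i \in S); rewrite ?addr0 ?add0r.
Qed.

Lemma sqnorm_restrD k (B S : {set 'I_k}) x : B \subset S ->
  sqnorm (restr S x) = sqnorm (restr B x) + sqnorm (restr (S :\: B) x).
Proof. by move=> BS; rewrite !sqnorm_restr (big_setID B) (setIidPr BS). Qed.

Lemma sqnorm_restrC k (S : {set 'I_k}) x :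
  sqnorm x = sqnorm (restr S x) + sqnorm (restr (~: S) x).
Proof.
rewrite !sqnorm_restr [LHS](bigID (mem S)) /=; congr (_ + _).
by apply: eq_bigl => i; rewrite inE.
Qed.

Lemma sqnorm_restrS k (B S : {set 'I_k}) x : B \subset S ->
  sqnorm (restr B x) <= sqnorm (restr S x).
Proof. by move=> BS; rewrite (sqnorm_restrD x BS) lerDl sqnorm_ge0. Qed.

Lemma ksparse_restr k (S : {set 'I_k}) s x : (#|S| <= s)%N -> ksparse s (restr S x).
Proof.
move=> Ss; apply: leq_trans Ss; apply: subset_leq_card; apply/subsetP => i.
by rewrite inE mxE; case: ifP; rewrite ?eqxx.
Qed.

Lemma normq_q_on_le_sqnorm k q (x : 'cV[R]_k) (T S : {set 'I_k}) (s : nat) :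
  0 < q -> q <= 1 -> T \subset S -> (#|T| <= s)%N ->
  normq_q_on q x T <= s%:R `^ (1 - q / 2) * sqnorm (restr S x) `^ (q / 2).
Proof.
move=> q0 q1 TS Ts; have q20 : 0 < q / 2 by rewrite divr_gt0.
have q2lt1 : q / 2 < 1 by rewrite ltr_pdivrMr // mul1r (le_lt_trans q1) // ltr1n.
have := @sum_powR_le _ _ T (fun i => x i 0 ^+ 2) _ q20 q2lt1 (fun i => sqr_ge0 _).
rewrite -sqnorm_restr /normq_q_on (eq_bigr _ (fun i _ => norm_powR_sqr q (x i 0))).
move=> /le_trans; apply; apply: ler_pM; rewrite ?powR_ge0 //.
  by apply: ge0_ler_powR; rewrite ?nnegrE ?ler0n ?subr_ge0 ?ler_nat ?ltW.
apply: ge0_ler_powR; rewrite ?nnegrE ?sqnorm_ge0 ?(ltW q20) //.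
exact: sqnorm_restrS.
Qed.

Lemma normq_q_ge0 k q (u : 'cV[R]_k) : 0 <= normq_q q u.
Proof. by rewrite sumr_ge0 // => i _; rewrite powR_ge0. Qed.

Lemma normq_q_on_ge0 k q (u : 'cV[R]_k) (S : {set 'I_k}) : 0 <= normq_q_on q u S.
Proof. by rewrite sumr_ge0 // => i _; rewrite powR_ge0. Qed.

Lemma normq_qD k q (u v : 'cV[R]_k) : 0 < q -> q <= 1 ->
  normq_q q (u + v) <= normq_q q u + normq_q q v.
Proof.
move=> q0 q1; rewrite /normq_q -big_split /=; apply: ler_sum => i _; rewrite mxE.
apply: le_trans (powRD_le q0 q1 (normr_ge0 _) (normr_ge0 _)).
by apply: ge0_ler_powR; rewrite ?nnegrE ?(ltW q0) ?addr_ge0 // ler_normD.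
Qed.

Lemma normq_qN k q (u : 'cV[R]_k) : normq_q q (- u) = normq_q q u.
Proof. by apply: eq_bigr => i _; rewrite mxE normrN. Qed.

End Vectors.

Section Frame.
Variables (R : realType) (n d : nat) (D : 'M[R]_(n, d)) (L U : R).
Hypotheses (L0 : 0 < L) (frameD : is_frame D L U).

Lemma frame_sqnorm_ge (f : 'cV[R]_n) : L * sqnorm f <= sqnorm (D^T *m f).
Proof. by have /andP[] := frameD f; rewrite !norm2_sqr. Qed.

Lemma frame_sqnorm_le (f : 'cV[R]_n) : sqnorm (D^T *m f) <= U * sqnorm f.
Proof. by have /andP[] := frameD f; rewrite !norm2_sqr. Qed.

Lemma frame_gram_unit : D *m D^T \in unitmx.
Proof.
rewrite -row_free_unit; apply: inj_row_free => v vG0.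
have Gv0 : D *m D^T *m v^T = 0.
  by rewrite -[D *m D^T]trmxK trmx_mul trmxK -trmx_mul vG0 trmx0.
have DvT0 : sqnorm (D^T *m v^T) = 0.
  by rewrite -dotvv dotv_mulmx trmxK mulmxA Gv0 /dotv big1 // => i _; rewrite !mxE mulr0.
have : L * sqnorm v^T <= 0 by rewrite -DvT0 frame_sqnorm_ge.
rewrite pmulr_rle0 // => vT0; apply: trmx_inj; rewrite trmx0; apply: sqnorm_eq0.
by apply/eqP; rewrite eq_le vT0 sqnorm_ge0.
Qed.

Lemma dagger_mul_trmx : dagger D *m D^T = 1%:M.
Proof. by rewrite /dagger -mulmxA mulVmx // frame_gram_unit. Qed.

Lemma gram_mul_dagger : D *m D^T *m dagger D = D.
Proof. by rewrite /dagger mulKVmx // frame_gram_unit. Qed.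

Lemma frame_sqnorm_dagger (v : 'cV[R]_d) : L * sqnorm (dagger D *m v) <= sqnorm v.
Proof.
set y := dagger D *m v; set t := sqnorm (D^T *m y).
have tE : t = dotv (D^T *m y) v.
  by rewrite /t -dotvv dotv_mulmx trmxK mulmxA /y mulmxA gram_mul_dagger [RHS]dotv_mulmx trmxK.
have t_le : t <= sqnorm v.
  have := sqr_dotv_le (D^T *m y) v; rewrite -tE -/t => tt.
  have := sqnorm_ge0 (D^T *m y); have := sqnorm_ge0 v; rewrite -/t; nra.
exact: le_trans (frame_sqnorm_ge y) t_le.
Qed.

Lemma sqr_sqnorm_restr_le (h : 'cV[R]_n) (S : {set 'I_d}) :
  sqnorm (restr S (D^T *m h)) ^+ 2
    <= U * sqnorm (D^T *m h) * sqnorm (dagger D *m restr S (D^T *m h)).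
Proof.
set x := D^T *m h; set u := dagger D *m restr S x.
have Du : D *m restr S x = D *m (D^T *m u).
  by rewrite /u (mulmxA D) (mulmxA (D *m D^T)) gram_mul_dagger.
have -> : sqnorm (restr S x) = dotv x (D^T *m u).
  by rewrite -dotv_restr /x !dotv_mulmx trmxK Du.
apply: le_trans (sqr_dotv_le _ _) _.
by rewrite [U * _]mulrC -mulrA ler_wpM2l ?sqnorm_ge0 // frame_sqnorm_le.
Qed.

End Frame.

Section Shelling.
Variables (R : realType) (I : finType) (y : I -> R).

Lemma exists_top_subset (k : nat) (S : {set I}) :
  exists B : {set I}, [/\ B \subset S, #|B| = minn k #|S| &
    forall i j, i \in B -> j \in S :\: B -> y j <= y i].
Proof.
elim: k => [|k [B [BS cB topB]]].
  by exists set0; split; rewrite ?sub0set ?cards0 ?min0n // => i j; rewrite inE.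
have [Sk|kS] := leqP #|S| k; first by exists B; split; rewrite // cB; lia.
have /set0Pn[j0 j0SB] : S :\: B != set0.
  by rewrite -card_gt0 cardsD (setIidPr BS) cB; lia.
have [m mSB m_max] := @arg_maxP _ _ _ j0 (mem (S :\: B)) y j0SB.
have /setDP[mS mB] := mSB.
exists (m |: B); split.
- by rewrite subUset sub1set mS.
- by rewrite cardsU1 mB cB; lia.
- move=> i j /setU1P[-> | iB] /setDP[jS]; rewrite in_setU1 negb_or => /andP[_ jB].
    by apply: m_max; apply/setDP.
  by apply: topB => //; apply/setDP.
Qed.

Variable a : nat.
Hypothesis a0 : (0 < a)%N.

Lemma top_subset_le_avg (S B : {set I}) : B \subset S -> #|B| = minn a #|S| ->
    (forall i j, i \in B -> j \in S :\: B -> y j <= y i) ->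
  forall j, j \in S :\: B -> y j <= (\sum_(i in B) y i) / a%:R.
Proof.
move=> BS cB topB j jSB.
have cBa : #|B| = a.
  apply/eqP; apply: contraT => cBn; move: jSB.
  suff -> : B = S by rewrite setDv inE.
  by apply/eqP; rewrite eqEcard BS /=; move: cBn; rewrite cB; lia.
by rewrite ler_pdivlMr ?ltr0n // -cBa mulr_natr -sumr_const ler_sum // => i /topB ->.
Qed.

Variables (F : {set I} -> R) (M : R).
Hypotheses (y_ge0 : forall i, 0 <= y i)
  (F_subadd : forall B S : {set I}, B \subset S -> F S <= F B + F (S :\: B))
  (F_block : forall (B : {set I}) c, (#|B| <= a)%N -> 0 <= c ->
     (forall i, i \in B -> y i <= c) -> F B <= M * c).

(* Peel off the [a] largest values of [y] at a time: every value of a block is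
   dominated by the average of the previous block. *)
Lemma shelling_bound (S : {set I}) (c : R) : 0 <= c -> (forall i, i \in S -> y i <= c) ->
  F S <= M * (c + (\sum_(i in S) y i) / a%:R).
Proof.
have [N] := ubnP #|S|; elim: N S c => // N IH S c ltSN c0 yc.
have [S0|Sn0] := eqVneq S set0.
  by rewrite S0 big_set0 mul0r addr0 F_block ?cards0 // => i; rewrite inE.
have [B [BS cB topB]] := exists_top_subset a S.
set c' := (\sum_(i in B) y i) / a%:R.
have c'0 : 0 <= c' by rewrite divr_ge0 ?sumr_ge0.
have ltS'N : (#|S :\: B| < N)%N.
  have : (0 < #|S|)%N by rewrite card_gt0.
  by rewrite cardsD (setIidPr BS) cB; lia.
apply: le_trans (F_subadd BS) _.
apply: le_trans (lerD (F_block (_ : #|B| <= a)%N c0 _) (IH _ c' ltS'N c'0 _)) _.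
- by rewrite cB geq_minl.
- by move=> i /(subsetP BS) /yc.
- exact: top_subset_le_avg.
have -> : \sum_(i in S) y i = \sum_(i in B) y i + \sum_(i in S :\: B) y i.
  by rewrite (big_setID B) (setIidPr BS).
by rewrite -mulrDr mulrDl.
Qed.

End Shelling.

Section RIP.
Variables (R : realType) (m n d : nat) (A : 'M[R]_(m, n)) (D : 'M[R]_(n, d)) (L U q : R).
Hypotheses (q0 : 0 < q) (q1 : q <= 1) (L0 : 0 < L) (frameD : is_frame D L U).

Let q20 : 0 < q / 2. Proof. by rewrite divr_gt0. Qed.

Lemma sqnorm_restr_powR_le (x : 'cV[R]_d) (B : {set 'I_d}) (a : nat) (c : R) :
  (#|B| <= a)%N -> 0 <= c -> (forall i, i \in B -> `|x i 0| `^ q <= c) ->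
  sqnorm (restr B x) `^ (q / 2) <= a%:R `^ (q / 2) * c.
Proof.
move=> Ba c0 xc; have inv_q2 : (q / 2)^-1 = 2 / q by rewrite invf_div.
have x2c i : i \in B -> x i 0 ^+ 2 <= c `^ (2 / q).
  by move=> /xc; rewrite norm_powR_sqr -inv_q2; apply: ler_powRV; rewrite ?sqr_ge0.
have sq_le : sqnorm (restr B x) <= a%:R * c `^ (2 / q).
  rewrite sqnorm_restr (le_trans (ler_sum _ x2c)) // sumr_const.
  by rewrite -[_ *+ #|B|]mulr_natl ler_wpM2r ?powR_ge0 ?ler_nat.
apply: le_trans (ge0_ler_powR (ltW q20) _ _ sq_le) _; rewrite ?nnegrE ?sqnorm_ge0 //.
  by rewrite mulr_ge0 ?powR_ge0.
by rewrite powRM ?powR_ge0 // powR_divK.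
Qed.

Lemma rip_restr_le (k : nat) (delta : R) (x : 'cV[R]_d) (B : {set 'I_d}) :
  DqRIP A D q k delta -> (#|B| <= k)%N ->
  L `^ (q / 2) * normq_q q (A *m (dagger D *m restr B x))
    <= (1 + delta) * sqnorm (restr B x) `^ (q / 2).
Proof.
move=> [/andP[delta0 _] rip] Bk; have /andP[_ up] := rip _ (ksparse_restr x Bk).
apply: le_trans (ler_wpM2l (powR_ge0 _ _) up) _.
rewrite norm2_powR mulrCA ler_wpM2l ?addr_ge0 // -powRM ?sqnorm_ge0 ?(ltW L0) //.
apply: (ge0_ler_powR (ltW q20)); rewrite ?nnegrE ?mulr_ge0 ?sqnorm_ge0 ?(ltW L0) //.
exact: frame_sqnorm_dagger L0 frameD _.
Qed.

Lemma rip_head_le (k : nat) (delta : R) (x : 'cV[R]_d) (S : {set 'I_d}) :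
  DqRIP A D q k delta -> (#|S| <= k)%N ->
  (1 - delta) * (L * sqnorm (dagger D *m restr S x)) `^ (q / 2)
    <= L `^ (q / 2) * (normq_q q (A *m (dagger D *m x))
                       + normq_q q (A *m (dagger D *m restr (~: S) x))).
Proof.
move=> [_ rip] Sk; set u := dagger D *m restr S x; set r := dagger D *m restr (~: S) x.
have Au : normq_q q (A *m u) <= normq_q q (A *m (dagger D *m x)) + normq_q q (A *m r).
  rewrite -(restrC S x) mulmxDr -/u -/r -[A *m u](addrK (A *m r)) -mulmxDr.
  by apply: le_trans (normq_qD _ _ q0 q1) _; rewrite normq_qN.
have /andP[low _] := rip _ (ksparse_restr x Sk); rewrite norm2_powR -/u in low.
rewrite powRM ?sqnorm_ge0 ?(ltW L0) // mulrCA ler_wpM2l ?powR_ge0 //.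
exact: le_trans low Au.
Qed.

Lemma tail_sqnorm_bound (a : nat) (x : 'cV[R]_d) (S : {set 'I_d}) (c : R) :
  (0 < a)%N -> 0 <= c -> (forall i, i \in S -> `|x i 0| `^ q <= c) ->
  sqnorm (restr S x) `^ (q / 2) <= a%:R `^ (q / 2) * (c + normq_q_on q x S / a%:R).
Proof.
move=> a0; apply: (shelling_bound (y := fun i => `|x i 0| `^ q)
  (F := fun S => sqnorm (restr S x) `^ (q / 2)) a0) => // [i|B S' BS|B c' Ba c'0].
- exact: powR_ge0.
- rewrite (sqnorm_restrD x BS) powRD_le ?sqnorm_ge0 //.
  by rewrite ler_pdivrMr // mul1r (le_trans q1) ?ler1n.
- exact: sqnorm_restr_powR_le.
Qed.

Lemma tail_rip_bound (a : nat) (delta : R) (x : 'cV[R]_d) (S : {set 'I_d}) (c : R) :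
  (0 < a)%N -> DqRIP A D q a delta -> 0 <= c ->
  (forall i, i \in S -> `|x i 0| `^ q <= c) ->
  L `^ (q / 2) * normq_q q (A *m (dagger D *m restr S x))
    <= (1 + delta) * (a%:R `^ (q / 2) * (c + normq_q_on q x S / a%:R)).
Proof.
move=> a0 rip; rewrite mulrA.
apply: (shelling_bound (y := fun i => `|x i 0| `^ q)
  (F := fun S => L `^ (q / 2) * normq_q q (A *m (dagger D *m restr S x))) a0) => //.
- by move=> i; exact: powR_ge0.
- move=> B S' BS; rewrite (restrD x BS) !mulmxDr -mulrDr ler_wpM2l ?powR_ge0 //.
  exact: normq_qD.
move=> B c' Ba c'0 xc'; apply: le_trans (rip_restr_le x rip Ba) _.
have /andP[delta0 _] := rip.1.
by rewrite -mulrA ler_wpM2l ?addr_ge0 // sqnorm_restr_powR_le.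
Qed.

Lemma exists_tail_bounds (a : nat) (delta : R) (x : 'cV[R]_d) (T : {set 'I_d}) :
  (0 < a)%N -> DqRIP A D q a delta ->
  exists T1 : {set 'I_d}, [/\ (#|T1| <= a)%N,
    a%:R `^ (1 - q / 2) * sqnorm (restr (~: (T :|: T1)) x) `^ (q / 2)
      <= normq_q_on q x (~: T) &
    a%:R `^ (1 - q / 2) * (L `^ (q / 2) * normq_q q (A *m (dagger D *m restr (~: (T :|: T1)) x)))
      <= (1 + delta) * normq_q_on q x (~: T)].
Proof.
move=> a0 rip; have ap : 0 < a%:R :> R by rewrite ltr0n.
have [T1 [T1T cT1 topT1]] := exists_top_subset (fun i => `|x i 0| `^ q) a (~: T).
set c := normq_q_on q x T1 / a%:R.
have c0 : 0 <= c by rewrite divr_ge0 ?normq_q_on_ge0.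
have xc : forall i, i \in ~: T :\: T1 -> `|x i 0| `^ q <= c.
  exact: top_subset_le_avg.
have massE : a%:R `^ (1 - q / 2) * (a%:R `^ (q / 2) * (c + normq_q_on q x (~: T :\: T1) / a%:R))
    = normq_q_on q x (~: T).
  rewrite mulrA -powRD; last by rewrite implybE pnatr_eq0 -lt0n a0 orbT.
  rewrite subrK powRr1 ?ler0n // mulrDr /c !(mulrCA a%:R) divff ?lt0r_neq0 // !mulr1.
  by rewrite /normq_q_on [RHS](big_setID T1) (setIidPr T1T).
exists T1; rewrite setCU -setDE -massE; split.
- by rewrite cT1 geq_minl.
- by rewrite ler_wpM2l ?powR_ge0 ?tail_sqnorm_bound.
- by rewrite [X in _ <= X]mulrCA ler_wpM2l ?powR_ge0 ?tail_rip_bound.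
Qed.

End RIP.

Section Main.
Variables (R : realType) (m n d : nat) (q L U : R) (D : 'M[R]_(n, d)) (A : 'M[R]_(m, n)).
Variables (s a : nat) (delta_a delta_sa : R).
Hypotheses (q0 : 0 < q) (q1 : q <= 1) (L0 : 0 < L) (LU : L <= U) (frameD : is_frame D L U).
Hypotheses (a0 : (0 < a)%N) (ripa : DqRIP A D q a delta_a) (ripsa : DqRIP A D q (s + a) delta_sa).

Let Delta := (1 + delta_a) / (1 - delta_sa).

Let Delta_gt0 : 0 < Delta.
Proof.
have /andP[dla0 _] := ripa.1; have /andP[_ dsa1] := ripsa.1.
by rewrite divr_gt0 ?subr_gt0 // ltr_wpDr.
Qed.

Lemma head_sqnorm_powR_le (h : 'cV[R]_n) (S : {set 'I_d}) (K : R) :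
  (#|S| <= s + a)%N ->
  sqnorm (restr (~: S) (D^T *m h)) `^ (q / 2) <= K ->
  L `^ (q / 2) * (normq_q q (A *m h)
                  + normq_q q (A *m (dagger D *m restr (~: S) (D^T *m h)))) <= (1 + delta_a) * K ->
  sqnorm (restr S (D^T *m h)) `^ (q / 2) <= K * head_gain q (U / L) Delta `^ (q / 2).
Proof.
move=> cS tK AK; set x := D^T *m h; set u := dagger D *m restr S x.
have kappa1 : 1 <= U / L by rewrite ler_pdivlMr // mul1r.
have hx : dagger D *m x = h by rewrite /x mulmxA (dagger_mul_trmx L0 frameD) mul1mx.
apply: (head_powR_bound (p := L * sqnorm u)) tK _ => //;
  rewrite ?mulr_ge0 ?sqnorm_ge0 ?(ltW L0) ?(lt_le_trans ltr01 kappa1) //.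
- have := sqr_sqnorm_restr_le L0 frameD h S; rewrite -/x -/u (sqnorm_restrC S x) => hY.
  apply: le_trans hY _; set Y := sqnorm (restr S x) + _.
  rewrite (_ : U * _ * _ = U / L * (Y * (L * sqnorm u))); last by field; rewrite lt0r_neq0.
  rewrite -[X in _ <= X]mulrA ler_wpM2r ?mulr_ge0 ?addr_ge0 ?sqnorm_ge0 ?(ltW L0) //.
  by rewrite expr2 ler_peMl // (le_trans ler01 kappa1).
- have := rip_head_le q0 q1 L0 x ripsa cS; rewrite hx => hd.
  have /andP[_ dsa1] := ripsa.1.
  by rewrite /Delta mulrAC ler_pdivlMr ?subr_gt0 // mulrC (le_trans hd AK).
Qed.

Lemma normq_q_on_le_rip_theta (h : 'cV[R]_n) (T : {set 'I_d}) : (#|T| <= s)%N ->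
  normq_q_on q (D^T *m h) T
    <= rip_theta q (U / L) Delta (s%:R / a%:R)
       * (normq_q_on q (D^T *m h) (~: T)
          + L `^ (q / 2) * a%:R `^ (1 - q / 2) * normq_q q (A *m h) / (1 + delta_a)).
Proof.
move=> cT; set x := D^T *m h; set beta := normq_q_on q x (~: T).
set a' := a%:R `^ (1 - q / 2); set NA := normq_q q (A *m h).
set E := L `^ (q / 2) * a' * NA / (1 + delta_a).
have a'0 : 0 < a' by rewrite powR_gt0 ?ltr0n.
have /andP[dla0 _] := ripa.1.
have E0 : 0 <= E.
  by rewrite /E !mulr_ge0 ?invr_ge0 ?addr_ge0 ?powR_ge0 ?normq_q_ge0 ?(ltW a'0).
have [T1 [cT1 tail_sq tail_A]] := exists_tail_bounds q0 q1 L0 frameD x T a0 ripa.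
set S := T :|: T1; set K := (beta + E) / a'.
have cS : (#|S| <= s + a)%N by rewrite (leq_trans (leq_card_setU T T1)) // leq_add.
have tK : sqnorm (restr (~: S) x) `^ (q / 2) <= K.
  by rewrite ler_pdivlMr // mulrC (le_trans tail_sq) // lerDl.
have AK : L `^ (q / 2) * (NA + normq_q q (A *m (dagger D *m restr (~: S) x)))
    <= (1 + delta_a) * K.
  rewrite -(ler_pM2l a'0).
  have -> : a' * ((1 + delta_a) * K) = (1 + delta_a) * beta + a' * (L `^ (q / 2) * NA).
    by rewrite /K /E; field; rewrite !lt0r_neq0 // ltr_wpDr.
  by rewrite !mulrDr addrC lerD2r.
have := head_sqnorm_powR_le cS tK AK; rewrite -/x => Yle.
apply: le_trans (normq_q_on_le_sqnorm x q0 q1 (subsetUl T T1) cT) _.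
apply: le_trans (ler_wpM2l (powR_ge0 _ _) Yle) _.
have rhoE : (s%:R / a%:R) `^ (1 - q / 2) = s%:R `^ (1 - q / 2) / a' :> R.
  by rewrite powRM ?invr_ge0 ?ler0n // powR_inv ?ler0n.
rewrite (rip_thetaE _ q0 (divr_gt0 (lt_le_trans L0 LU) L0) Delta_gt0) rhoE /K.
by rewrite le_eqVlt; apply/orP; left; apply/eqP; field; rewrite lt0r_neq0.
Qed.

End Main.

Theorem lemma2p8 (R : realType) (m n d : nat) (q L U : R)
  (D : 'M[R]_(n, d)) (A : 'M[R]_(m, n)) (s a : nat) (delta_a delta_sa : R) :
  0 < q -> q <= 1 ->
  0 < L -> L <= U -> is_frame D L U ->
  (0 < s)%N -> (s < a)%N ->
  RIP_const A D q a delta_a ->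
  RIP_const A D q (s + a) delta_sa ->
  let kappa := U / L in
  let rho := s%:R / a%:R in
  let Delta := (1 + delta_a) / (1 - delta_sa) in
  let theta := 2 `^ (- (q / 2))
      * (1 + Num.sqrt (1 + 4 * kappa ^- 2 * Delta `^ (- (2 / q)))) `^ (q / 2)
      * kappa `^ q * Delta * rho `^ (1 - q / 2) in
  (forall (h : 'cV[R]_n) (T : {set 'I_d}),
     largest_set s (D^T *m h) T ->
     normq_q_on q (D^T *m h) T
       <= theta * normq_q_on q (D^T *m h) (~: T)
          + theta * L `^ (q / 2) * a%:R `^ (1 - q / 2) * normq_q q (A *m h)
            / (1 + delta_a))
  /\
  (rho `^ (1 - q / 2) * (rho `^ (2 / q - 1) + 1) `^ (q / 2) * kappa `^ q
     * (1 + delta_a) < 1 - delta_sa -> theta < 1).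
Proof.
move=> q0 q1 L0 LU frameD s0 sa [ripa _] [ripsa _] kappa rho Delta theta.
have a0 : (0 < a)%N := ltn_trans s0 sa.
split=> [h T [cT _] | hyp].
  have := normq_q_on_le_rip_theta q0 q1 L0 LU frameD a0 ripa ripsa h (eq_leq cT).
  by rewrite mulrDr !mulrA.
have /andP[dla0 _] := ripa.1; have /andP[_ dsa1] := ripsa.1.
apply: rip_theta_lt1 => //; first by rewrite divr_gt0 // (lt_le_trans L0 LU).
  by rewrite divr_gt0 ?subr_gt0 // ltr_wpDr.
by rewrite /Delta mulrA ltr_pdivrMr ?subr_gt0 // mul1r.
Qed.
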